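(* Let $K=\mathbb{F}_{q^n}$, let $\sigma$ be an automorphism of $K$ of order $n>1$ with fixed field $F=\mathbb{F}_q$, and let $f\in K[t;\sigma]$ be monic of degree $m\ge 2$, irreducible and not right-invariant, with $n\ge m-1$. Suppose the multiplicative loop $L_f$ of $S_f$ has nucleus $K^\times\cdot 1$. Then $L_f$ has at least $s=(q^n-1)/(q-1)$ inner automorphisms extending $\mathrm{id}_{K^\times}$. These form a cyclic subgroup of $\mathrm{Aut}(L_f)$ isomorphic to $\ker(N_{K/F})$, and a cyclic subgroup of middle inner mappings in $\mathrm{Inn}(L_f)$ isomorphic to $\ker(N_{K/F})$.
   Context: $R=K[t;\sigma]$ is the twisted polynomial ring ($tb=\sigma(b)t$ for $b\in K$). $f$ is irreducible if it has no factorization into two factors of smaller degree; right-invariant if $Rf$ is a two-sided ideal. $S_f$ is the set of elements of $R$ of degree $<m$ with multiplication $g\circ h=gh\bmod_r f$ (remainder of right division by $f$), a proper semifield; $L_f=S_f\setminus\{0\}$ is its multiplicative loop. The nucleus of a loop $L$ is the set of $x$ with $(xy)z=x(yz)$, $(yx)z=y(xz)$, $(yz)x=y(zx)$ for all $y,z\in L$. For $x\in L$, $L_x(y)=xy$, $R_x(y)=yx$; the middle inner mapping is $T_x=L_x^{-1}R_x$. The multiplication group $\mathrm{Mlt}(L)$ is generated by all $L_x,R_x$, and $\mathrm{Inn}(L)=\{g\in\mathrm{Mlt}(L): g(1)=1\}$. An inner automorphism of $L_f$ is a loop automorphism of the form $x\mapsto (c_lx)c$ for some $c\in L_f$ with left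 inverse $c_l$ (the restriction of an inner automorphism of the algebra $S_f$). $N_{K/F}$ is the field norm $K^\times\to F^\times$. *)

From HB Require Import structures.
From mathcomp Require Import all_boot all_order all_algebra all_fingroup all_solvable.
Set Implicit Arguments. Unset Strict Implicit. Unset Printing Implicit Defensive.
Import GRing.Theory.
Local Open Scope ring_scope.

(* Elements of R = K[t;sigma] are represented by their coefficient sequences,
   i.e. by {poly K} (the additive structure coincides); the multiplication is
   the twisted one:  (a t^i)(b t^j) = a sigma^i(b) t^(i+j). *)
Section Twisted.
Variable K : fieldType.
Variable sigma : K -> K.

Definition skmul (p q : {poly K}) : {poly K} :=
  \sum_(i < size p) \sum_(j < size q)
     (p`_i * iter i sigma q`_j) *: 'X^(i + j).

Definition skmodr_step (f h : {poly K}) : {poly K} :=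
  if (size h < size f)%N then h
  else h - skmul (lead_coef h *: 'X^(size h - size f)) f.

(* remainder of right division of g by the monic f: g = k f + r, deg r < deg f *)
Definition skmodr (f g : {poly K}) : {poly K} := iter (size g) (skmodr_step f) g.

Definition sk_irreducible (f : {poly K}) : Prop :=
  ~ exists g h : {poly K},
      [/\ f = skmul g h, (size g < size f)%N & (size h < size f)%N].

(* f right-invariant: R f is a two-sided ideal, i.e. f g \in R f for all g *)
Definition right_invariant (f : {poly K}) : Prop :=
  forall g : {poly K}, exists h : {poly K}, skmul f g = skmul h f.

(* the field norm N_{K/F}, F = Fix(sigma), sigma of order n generating Gal(K/F) *)
Definition sknorm (n : nat) (a : K) : K := \prod_(i < n) iter i sigma a.

Definition sf_mul (f : {poly K}) (m : nat) (x y : 'rV[K]_m) : 'rV[K]_m :=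
  poly_rV (skmodr f (skmul (rVpoly x) (rVpoly y))).

Definition sf_const (m : nat) (a : K) : 'rV[K]_m := poly_rV a%:P.
Definition sf_one (m : nat) : 'rV[K]_m := sf_const m 1.
End Twisted.

Definition kerN (K : finFieldType) (sigma : K -> K) (n : nat) : {set {unit K}} :=
  [set u : {unit K} | sknorm sigma n (val u) == 1].

(* Bijections of L_f are encoded as permutations of S_f fixing 0. *)
Section Loop.
Variable K : fieldType.
Variable m : nat.
Local Notation S := 'rV[K]_m.
Variable mul : S -> S -> S.
Variable one : S.

Definition in_nucleus (x : S) : Prop :=
  x != 0 /\
  forall y z : S, y != 0 -> z != 0 ->
    [/\ mul (mul x y) z = mul x (mul y z),
        mul (mul y x) z = mul y (mul x z) &
        mul (mul y z) x = mul y (mul z x)].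

Definition loop_aut (p : S -> S) : Prop :=
  p 0 = 0 /\ forall x y : S, x != 0 -> y != 0 -> p (mul x y) = mul (p x) (p y).

Definition inner_aut (p : S -> S) : Prop :=
  loop_aut p /\
  exists c cl : S, [/\ c != 0, cl != 0, mul cl c = one &
                      forall x : S, x != 0 -> p x = mul (mul cl x) c].

(* middle inner mapping T_x = L_x^{-1} R_x, i.e. x * T_x(y) = y * x *)
Definition mid_inner (p : S -> S) : Prop :=
  exists x : S, x != 0 /\ forall y : S, y != 0 -> mul x (p y) = mul y x.
End Loop.

Section Mlt.
Variable K : finFieldType.
Variable m : nat.
Local Notation S := 'rV[K]_m.
Variable mul : S -> S -> S.
Variable one : S.

(* the (at most one) permutation of S_f agreeing with L_x, resp. R_x *)
Definition Lset (x : S) : {set {perm S}} := [set p : {perm S} | [forall y, p y == mul x y]].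
Definition Rset (x : S) : {set {perm S}} := [set p : {perm S} | [forall y, p y == mul y x]].

Definition Mlt : {set {perm S}} := (<<\bigcup_(x | x != 0) (Lset x :|: Rset x)>>)%g.
Definition Inn : {set {perm S}} := [set g in Mlt | g one == one].
End Mlt.

From HB Require Import structures.
From mathcomp Require Import all_boot all_order all_algebra all_fingroup all_solvable.
From mathcomp Require Import ring.
Set Implicit Arguments. Unset Strict Implicit. Unset Printing Implicit Defensive.
Import GRing.Theory.
Local Open Scope ring_scope.

(* For a nonzero constant c of K, right multiplication by c in S_f multiplies
   the i-th coefficient by sigma^i(c), while left multiplication by c^-1 divides
   every coefficient by c.  Hence the inner map x |-> (c^-1 x) c is the diagonal
   scaling by c^-1 sigma^i(c), i.e. the middle inner mapping T_c = L_c^-1 R_c;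
   it is a loop automorphism because c and c^-1 lie in the nucleus.  The map
   c |-> T_c is a group morphism on K^x with kernel F^x, so its image is cyclic
   of order (q^n - 1)/(q - 1).  By Hilbert 90 every u of norm 1 is sigma(c)/c,
   and T_c is then the scaling by the partial norms of u, which identifies the
   image with ker N_{K/F}. *)

Section IterRMorphism.
Variables (R : pzRingType) (sigma : {rmorphism R -> R}) (i : nat).

Lemma iter_is_zmod_morphism : zmod_morphism (iter i sigma).
Proof. by elim: i => [|k IH] x y //=; rewrite IH rmorphB. Qed.

Lemma iter_is_monoid_morphism : monoid_morphism (iter i sigma).
Proof.
split; first by elim: i => //= k ->; rewrite rmorph1.
by elim: i => [|k IH] x y //=; rewrite IH rmorphM.
Qed.

HB.instance Definition _ :=
  GRing.isZmodMorphism.Build R R (iter i sigma) iter_is_zmod_morphism.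
HB.instance Definition _ :=
  GRing.isMonoidMorphism.Build R R (iter i sigma) iter_is_monoid_morphism.

Lemma iter_fixed x : sigma x = x -> iter i sigma x = x.
Proof. by move=> x_fixed; elim: i => //= k ->. Qed.

End IterRMorphism.

Section PartialNorms.
Variables (K : fieldType) (sigma : {rmorphism K -> K}).
Implicit Types (a c : K) (i : nat).

Lemma sknorm0 a : sknorm sigma 0 a = 1.
Proof. exact: big_ord0. Qed.

Lemma sknorm1 a : sknorm sigma 1 a = a.
Proof. exact: big_ord1. Qed.

Lemma sknormS i a : sknorm sigma i.+1 a = a * sigma (sknorm sigma i a).
Proof. by rewrite /sknorm rmorph_prod big_ord_recl. Qed.

Lemma sknormM i a b : sknorm sigma i (a * b) = sknorm sigma i a * sknorm sigma i b.
Proof. by rewrite /sknorm -big_split; apply: eq_bigr => j _; rewrite rmorphM. Qed.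

Lemma sknorm_neq0 i a : a != 0 -> sknorm sigma i a != 0.
Proof. by move=> a0; rewrite prodf_seq_neq0; apply/allP => j _; rewrite fmorph_eq0. Qed.

Lemma sknorm_coboundary i c : c != 0 ->
  sknorm sigma i (sigma c / c) = iter i sigma c / c.
Proof.
move=> c0; elim: i => [|i IH]; first by rewrite sknorm0 divff.
rewrite /sknorm big_ord_recr /= -/(sknorm sigma i _) IH rmorphM fmorphV /= -iterSr iterS.
have : iter i sigma c != 0 by rewrite fmorph_eq0.
by move: (iter i sigma c) => b b0; field; apply/andP.
Qed.

End PartialNorms.

Section Dedekind.
Variables (K : fieldType) (chi : nat -> K -> K).
Hypotheses (chiM : forall i x y, chi i (x * y) = chi i x * chi i y)
           (chi1 : forall i, chi i 1 = 1).

Lemma dedekind_independence k :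
  (forall i j, (i < j < k)%N -> exists z, chi i z != chi j z) ->
  forall a : nat -> K, (forall y, \sum_(i < k) a i * chi i y = 0) ->
  forall i, (i < k)%N -> a i = 0.
Proof.
elim: k => [|k IH] chi_neq a sum0 i //.
have sum0k y : \sum_(i < k) a i * chi i y = - (a k * chi k y).
  by apply/eqP; rewrite -addr_eq0; move: (sum0 y); rewrite big_ord_recr => ->.
have a_lt j : (j < k)%N -> a j = 0.
  move=> jk; have [z hz] : exists z, chi j z != chi k z by apply: chi_neq; rewrite jk /=.
  (* Subtract chi k z times the relation at y from the relation at z y. *)
  pose b i := a i * (chi i z - chi k z).
  have sumb0 y : \sum_(i < k) b i * chi i y = 0.
    transitivity (\sum_(i < k) a i * chi i (z * y)
                  - chi k z * \sum_(i < k) a i * chi i y).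
      by rewrite mulr_sumr -sumrB; apply: eq_bigr => i' _; rewrite chiM /b; ring.
    by rewrite !sum0k chiM; ring.
  have chi_neq' i' j' : (i' < j' < k)%N -> exists z, chi i' z != chi j' z.
    by case/andP=> ij /ltnW jk'; apply: chi_neq; rewrite ij.
  have /eqP := IH chi_neq' b sumb0 j jk.
  by rewrite mulf_eq0 subr_eq0 (negbTE hz) orbF => /eqP.
rewrite ltnS leq_eqVlt => /orP[/eqP ->|]; last exact: a_lt.
have := sum0 1; rewrite big_ord_recr big1 /= => [|i' _]; last by rewrite a_lt ?mul0r.
by rewrite add0r chi1 mulr1.
Qed.

End Dedekind.

Section Hilbert90.
Variables (K : finFieldType) (sigma : {rmorphism K -> K}) (n : nat).
Hypotheses (sigma_bij : bijective sigma) (n_gt0 : (0 < n)%N)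
  (sigma_n : iter n sigma =1 id)
  (sigma_order : forall k, (0 < k < n)%N -> ~ iter k sigma =1 id).

Lemma iter_neq i j : (i < j < n)%N -> exists z, iter i sigma z != iter j sigma z.
Proof.
case/andP=> ij jn; apply/existsP; apply: contraT; rewrite negb_exists.
move=> /forallP eq_ij; have [g sigmaK gK] := sigma_bij.
have iter_gK k x : iter k sigma (iter k g x) = x.
  by elim: k => //= k IH; rewrite -iterS iterSr gK.
have /sigma_order[] : (0 < j - i < n)%N.
  by rewrite subn_gt0 ij (leq_ltn_trans (leq_subr i j)).
move=> x; have /negPn/eqP e := eq_ij (iter i g x).
by rewrite -{1}(iter_gK i x) -iterD subnK ?(ltnW ij) // -e iter_gK.
Qed.

Lemma hilbert90 u : sknorm sigma n u = 1 -> exists2 c, c != 0 & sigma c / c = u.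
Proof.
move=> Nu1.
pose b y := \sum_(i < n) sknorm sigma i u * iter i sigma y.
have [y by0] : exists y, b y != 0.
  apply/existsP; apply: contraT; rewrite negb_exists => /forallP b0.
  have := dedekind_independence (fun i => rmorphM (iter i sigma))
    (fun i => rmorph1 (iter i sigma)) iter_neq (a := fun i => sknorm sigma i u).
  move=> /(_ (fun y => eqP (negPn (b0 y))) 0%N n_gt0) /eqP.
  by rewrite sknorm0 oner_eq0.
have ub : u * sigma (b y) = b y.
  rewrite rmorph_sum mulr_sumr.
  under eq_bigr => i _ do rewrite rmorphM mulrA -sknormS -iterS.
  rewrite /b -(prednK n_gt0) big_ord_recr big_ord_recl /= -iterS prednK //.
  by rewrite Nu1 sigma_n sknorm0 !mul1r addrC.
exists (b y)^-1; first by rewrite invr_eq0.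
by rewrite fmorphV invrK -{2}ub mulrCA mulVf ?mulr1 ?fmorph_eq0.
Qed.

End Hilbert90.

Section ConstantMultiplication.
Variables (K : fieldType) (sigma : {rmorphism K -> K}).
Implicit Types (a : K) (f g p q : {poly K}).

Lemma skmul0l q : skmul sigma 0 q = 0.
Proof. by rewrite /skmul size_poly0 big_ord0. Qed.

Lemma skmul0r p : skmul sigma p 0 = 0.
Proof. by apply: big1 => i _; rewrite size_poly0 big_ord0. Qed.

Lemma skmulCl a q : skmul sigma a%:P q = a *: q.
Proof.
have [->|a0] := eqVneq a 0; first by rewrite skmul0l scale0r.
rewrite /skmul size_polyC a0 big_ord1.
transitivity (a *: \poly_(i < size q) q`_i); last by rewrite coefK.
by rewrite poly_def scaler_sumr; apply: eq_bigr => j _; rewrite coefC add0n scalerA.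
Qed.

Lemma skmulCr p a : skmul sigma p a%:P = \poly_(i < size p) (p`_i * iter i sigma a).
Proof.
have [->|a0] := eqVneq a 0.
  by rewrite skmul0r; apply/polyP => i; rewrite coef0 coef_poly rmorph0 mulr0 if_same.
rewrite /skmul size_polyC a0 poly_def; apply: eq_bigr => i _.
by rewrite big_ord1 coefC addn0.
Qed.

Lemma skmodr_small f g : (size g < size f)%N -> skmodr sigma f g = g.
Proof.
by move=> lt_gf; rewrite /skmodr; elim: (size g) => //= k ->; rewrite /skmodr_step lt_gf.
Qed.

Lemma skmodr0 f : skmodr sigma f 0 = 0.
Proof. by rewrite /skmodr size_poly0. Qed.

Variables (f : {poly K}) (m : nat).
Hypotheses (size_f : size f = m.+1) (m_gt0 : (0 < m)%N).
Local Notation mul := (sf_mul sigma f (m:=m)).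

Lemma sf_mul0l y : mul 0 y = 0.
Proof. by rewrite /sf_mul linear0 skmul0l skmodr0 linear0. Qed.

Lemma sf_mul0r y : mul y 0 = 0.
Proof. by rewrite /sf_mul linear0 skmul0r skmodr0 linear0. Qed.

Lemma rVpoly_const a : rVpoly (sf_const m a) = a%:P.
Proof. by rewrite poly_rV_K // (leq_trans (size_polyC_leq1 a)). Qed.

Lemma sf_const_eq0 a : (sf_const m a == 0) = (a == 0).
Proof. by rewrite -(can_eq (@rVpolyK _ _)) rVpoly_const linear0 polyC_eq0. Qed.

Lemma sf_mul_constl a y : mul (sf_const m a) y = a *: y.
Proof.
rewrite /sf_mul rVpoly_const skmulCl skmodr_small; first by rewrite linearZ /= rVpolyK.
by rewrite size_f ltnS (leq_trans (size_scale_leq _ _)) ?size_poly.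
Qed.

Lemma sf_mul_const a b : mul (sf_const m a) (sf_const m b) = sf_const m (a * b).
Proof. by rewrite sf_mul_constl /sf_const -linearZ /= -mul_polyC polyCM. Qed.

Lemma sf_mul_constr a y : mul y (sf_const m a) = \row_i (y 0 i * iter i sigma a).
Proof.
rewrite /sf_mul rVpoly_const skmulCr skmodr_small; last first.
  by rewrite size_f ltnS (leq_trans (size_poly _ _)) ?size_poly.
apply/rowP => i; rewrite !mxE coef_poly coef_rVpoly_ord; case: ltnP => // le_yi.
by rewrite -coef_rVpoly_ord nth_default ?mul0r.
Qed.

End ConstantMultiplication.

Section NucleusConjugation.
Variables (K : fieldType) (m : nat) (mul : 'rV[K]_m -> 'rV[K]_m -> 'rV[K]_m).
Variable one : 'rV[K]_m.
Hypotheses (mul0l : forall y, mul 0 y = 0) (mul0r : forall y, mul y 0 = 0)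
           (mul1l : forall y, mul one y = y).

Lemma in_nucleus_assoc x : in_nucleus mul x -> forall y z,
  [/\ mul (mul x y) z = mul x (mul y z),
      mul (mul y x) z = mul y (mul x z) &
      mul (mul y z) x = mul y (mul z x)].
Proof.
case=> _ assoc y z.
have [->|y0] := eqVneq y 0; first by rewrite !(mul0l, mul0r).
have [->|z0] := eqVneq z 0; first by rewrite !(mul0l, mul0r).
exact: assoc.
Qed.

Lemma nucleus_conjM c cl : in_nucleus mul c -> in_nucleus mul cl -> mul c cl = one ->
  forall x y, mul (mul cl (mul x y)) c = mul (mul (mul cl x) c) (mul (mul cl y) c).
Proof.
move=> /in_nucleus_assoc nuc_c /in_nucleus_assoc nuc_cl c_cl x y.
have [cl_l _ _] := nuc_cl x y.
have [_ _ c_r] := nuc_c (mul cl x) y.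
have [_ c_m _] := nuc_c (mul cl x) (mul (mul cl y) c).
have [c_l _ _] := nuc_c (mul cl y) c.
have [c_l' _ _] := nuc_c cl y.
by rewrite c_m -c_l -c_l' c_cl mul1l -c_r cl_l.
Qed.

End NucleusConjugation.

Section DiagonalScaling.
Variables (K : finFieldType) (m : nat).
Implicit Types (w : 'I_m -> K) (y : 'rV[K]_m).

Definition scale_row w y : 'rV[K]_m := \row_i (w i * y 0 i).

Lemma scale_row_inj w : (forall i, w i != 0) -> injective (scale_row w).
Proof.
move=> w_neq0 y z /rowP eq_yz; apply/rowP => i.
by move: (eq_yz i); rewrite !mxE => /mulfI->.
Qed.

Definition diag_perm w (w_neq0 : forall i, w i != 0) : {perm 'rV[K]_m} :=
  perm (scale_row_inj w_neq0).

Lemma diag_permE w w_neq0 y : @diag_perm w w_neq0 y = \row_i (w i * y 0 i).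
Proof. by rewrite permE. Qed.

Lemma diag_permM w1 w2 w w1_neq0 w2_neq0 w_neq0 : (forall i, w i = w1 i * w2 i) ->
  (@diag_perm w1 w1_neq0 * @diag_perm w2 w2_neq0)%g = @diag_perm w w_neq0.
Proof.
move=> w12; apply/permP => y; rewrite permM !diag_permE.
by apply/rowP => i; rewrite !mxE w12 mulrCA mulrA.
Qed.

Lemma eq_diag_perm w1 w2 w1_neq0 w2_neq0 : w1 =1 w2 ->
  @diag_perm w1 w1_neq0 = @diag_perm w2 w2_neq0.
Proof.
by move=> w12; apply/permP => y; rewrite !diag_permE; apply/rowP => i; rewrite !mxE w12.
Qed.

Lemma diag_perm_ones w w_neq0 i : @diag_perm w w_neq0 (const_mx 1) 0 i = w i.
Proof. by rewrite diag_permE !mxE mulr1. Qed.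

Lemma diag_perm_inj w1 w2 w1_neq0 w2_neq0 :
  @diag_perm w1 w1_neq0 = @diag_perm w2 w2_neq0 -> w1 =1 w2.
Proof.
by move=> eq12 i; rewrite -(diag_perm_ones w1_neq0) -(diag_perm_ones w2_neq0) eq12.
Qed.

Lemma diag_perm_eq1 w w_neq0 : @diag_perm w w_neq0 = 1%g <-> w =1 (fun=> 1).
Proof.
split=> [w_perm1 i|w_eq1]; first by rewrite -(diag_perm_ones w_neq0) w_perm1 perm1 mxE.
by apply/permP => y; rewrite diag_permE perm1; apply/rowP => i; rewrite mxE w_eq1 mul1r.
Qed.

End DiagonalScaling.

Section InnerMappings.
Variables (K : finFieldType) (sigma : {rmorphism K -> K}) (f : {poly K}) (m : nat).
Hypotheses (size_f : size f = m.+1) (m_gt1 : (1 < m)%N).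
Local Notation mul := (sf_mul sigma f (m:=m)).
Local Notation "a %:S" := (sf_const m a) (at level 2, format "a %:S").
Let m_gt0 : (0 < m)%N := ltnW m_gt1.
Let i1 : 'I_m := Ordinal m_gt1.
Implicit Types (a : K) (c u : {unit K}).

Lemma unit_neq0 u : val u != 0.
Proof. by rewrite -unitfE (valP u). Qed.

Lemma twist_neq0 c (i : 'I_m) : (val c)^-1 * iter i sigma (val c) != 0.
Proof. by rewrite mulf_neq0 ?invr_eq0 ?fmorph_eq0 ?unit_neq0. Qed.

Lemma right_weight_neq0 c (i : 'I_m) : iter i sigma (val c) != 0.
Proof. by rewrite fmorph_eq0 unit_neq0. Qed.

Lemma norm_weight_neq0 u (i : 'I_m) : sknorm sigma i (val u) != 0.
Proof. by rewrite sknorm_neq0 ?unit_neq0. Qed.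

Definition inner_perm c := diag_perm (twist_neq0 c).
Definition left_perm c := diag_perm (fun _ : 'I_m => unit_neq0 c).
Definition right_perm c := diag_perm (right_weight_neq0 c).
Definition norm_perm u := diag_perm (norm_weight_neq0 u).

Lemma left_perm_Lset c : left_perm c \in Lset mul (val c)%:S.
Proof.
rewrite inE; apply/forallP => y; rewrite diag_permE sf_mul_constl //.
by apply/eqP/rowP => i; rewrite !mxE.
Qed.

Lemma right_perm_Rset c : right_perm c \in Rset mul (val c)%:S.
Proof.
rewrite inE; apply/forallP => y; rewrite diag_permE sf_mul_constr //.
by apply/eqP/rowP => i; rewrite !mxE mulrC.
Qed.

Lemma inner_perm_RLV c : inner_perm c = (right_perm c * (left_perm c)^-1)%g.
Proof.
apply: (canRL (mulgK (left_perm c))); apply: diag_permM => i.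
by rewrite mulrC mulrA divff ?mul1r ?unit_neq0.
Qed.

Lemma inner_permE c x : inner_perm c x = mul (mul ((val c)^-1)%:S x) (val c)%:S.
Proof.
by rewrite diag_permE sf_mul_constr ?sf_mul_constl //; apply/rowP => i; rewrite !mxE; ring.
Qed.

Lemma inner_perm_const c a : inner_perm c a%:S = a%:S.
Proof.
rewrite diag_permE; apply/rowP => i; rewrite !mxE coefC.
by case: eqP => [/= -> |]; rewrite ?mulr0 // mulVf ?mul1r ?unit_neq0.
Qed.

Lemma inner_perm_mid c : mid_inner mul (inner_perm c).
Proof.
exists (val c)%:S; split=> [|y _]; first by rewrite sf_const_eq0 //; apply: unit_neq0.
rewrite sf_mul_constl // sf_mul_constr // diag_permE; apply/rowP => i; rewrite !mxE.
by rewrite !mulrA mulfV ?mul1r ?[_ * y 0 i]mulrC //; apply: unit_neq0.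
Qed.

Lemma inner_perm_Mlt c : inner_perm c \in Mlt mul.
Proof.
have cS_neq0 : (val c)%:S != 0 by rewrite sf_const_eq0 //; apply: unit_neq0.
rewrite inner_perm_RLV groupM ?groupV // mem_gen //; apply/bigcupP; exists (val c)%:S => //;
  by rewrite inE ?left_perm_Lset ?right_perm_Rset ?orbT.
Qed.

Lemma inner_permM : {morph inner_perm : c d / (c * d)%g >-> (c * d)%g}.
Proof.
move=> c d; apply/esym/diag_permM => i.
by rewrite FinRing.val_unitM invfM rmorphM; ring.
Qed.

Canonical inner_morph := @Morphism _ _ [set: {unit K}] _ (in2W inner_permM).

Lemma ker_inner_morph : ('ker inner_morph)%g = [set c : {unit K} | sigma (val c) == val c].
Proof.
apply/setP => c; rewrite !inE /=; apply/eqP/eqP => [/diag_perm_eq1/(_ i1) | c_fixed].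
  by move/(canRL (mulKf (invr_neq0 (unit_neq0 c)))); rewrite invrK mulr1.
by apply/diag_perm_eq1 => i; rewrite iter_fixed // mulVf ?unit_neq0.
Qed.

Lemma norm_permM : {morph norm_perm : u v / (u * v)%g >-> (u * v)%g}.
Proof. by move=> u v; apply/esym/diag_permM => i; rewrite FinRing.val_unitM sknormM. Qed.

Lemma norm_perm_inj : injective norm_perm.
Proof. by move=> u v /diag_perm_inj/(_ i1); rewrite /= !sknorm1 => /val_inj. Qed.

Lemma norm_perm_coboundary u c : sigma (val c) / val c = val u -> norm_perm u = inner_perm c.
Proof.
move=> u_cob; apply: eq_diag_perm => i.
by rewrite -u_cob sknorm_coboundary ?unit_neq0 // mulrC.
Qed.

Lemma inner_perm_aut c : (forall a, a != 0 -> in_nucleus mul a%:S) ->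
  inner_aut mul (sf_one K m) (inner_perm c).
Proof.
move=> nucleus_const; have c_neq0 := unit_neq0 c.
have ci_neq0 : (val c)^-1 != 0 by rewrite invr_eq0.
have mul1l y : mul (sf_one K m) y = y by rewrite sf_mul_constl // scale1r.
split; first split.
- by rewrite diag_permE; apply/rowP => i; rewrite !mxE mulr0.
- move=> x y _ _; rewrite !inner_permE.
  apply: (nucleus_conjM (@sf_mul0l _ sigma f m) (@sf_mul0r _ sigma f m) mul1l);
    [exact: nucleus_const | exact: nucleus_const | by rewrite sf_mul_const // mulfV].
exists (val c)%:S, ((val c)^-1)%:S; split; rewrite ?sf_const_eq0 //.
  by rewrite sf_mul_const // mulVf.
by move=> x _; rewrite inner_permE.
Qed.

Definition inner_group := (inner_morph @* [set: {unit K}])%G.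

Lemma inner_groupE : inner_group = inner_perm @: [set: {unit K}] :> {set _}.
Proof. exact: morphimEdom. Qed.

Lemma cyclic_inner_group : cyclic inner_group.
Proof. exact: morphim_cyclic (field_unit_group_cyclic _). Qed.

Lemma card_fixed_units :
  #|[set c : {unit K} | sigma (val c) == val c]| = #|[set a : K | sigma a == a]|.-1.
Proof.
rewrite (cardsD1 0) inE rmorph0 eqxx /= -(card_imset _ val_inj); apply: eq_card => a.
rewrite !inE; apply/imsetP/andP => [[c]|[a_neq0 a_fixed]].
  by rewrite inE => c_fixed ->; rewrite unit_neq0.
have a_unit : a \is a GRing.unit by rewrite unitfE.
by exists (FinRing.unit K a_unit); rewrite ?inE.
Qed.

Lemma card_inner_group :
  #|inner_group| = (#|K|.-1 %/ #|[set a : K | sigma a == a]|.-1)%N.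
Proof.
rewrite card_morphim setIid -card_finField_unit -card_fixed_units -ker_inner_morph.
by rewrite -(Lagrange (subsetT ('ker inner_morph)%g)) mulKn ?cardG_gt0.
Qed.

Variable n : nat.
Hypotheses (sigma_bij : bijective sigma) (n_gt0 : (0 < n)%N)
  (sigma_n : iter n sigma =1 id)
  (sigma_order : forall k, (0 < k < n)%N -> ~ iter k sigma =1 id).

Lemma norm_perm_kerN : norm_perm @: kerN sigma n = inner_group.
Proof.
rewrite inner_groupE; apply/setP => p; apply/imsetP/imsetP => [[u]|[c _ ->]].
  rewrite inE => /eqP /(hilbert90 sigma_bij n_gt0 sigma_n sigma_order) [c c_neq0 u_cob] ->.
  have c_unit : c \is a GRing.unit by rewrite unitfE.
  by exists (FinRing.unit K c_unit); [rewrite inE | apply: norm_perm_coboundary].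
have c_neq0 := unit_neq0 c.
have cob_unit : sigma (val c) / val c \is a GRing.unit.
  by rewrite unitfE mulf_neq0 ?invr_eq0 ?fmorph_eq0.
exists (FinRing.unit K cob_unit); last by rewrite (norm_perm_coboundary (c := c)).
by rewrite inE /= sknorm_coboundary // sigma_n mulfV.
Qed.

End InnerMappings.

Theorem mainTheorem3 (K : finFieldType) (sigma : {rmorphism K -> K})
    (q n m : nat) (f : {poly K}) :
  bijective sigma ->
  (1 < n)%N ->
  iter n sigma =1 id ->
  (forall k, (0 < k < n)%N -> ~ (iter k sigma =1 id)) ->
  #|[set x : K | sigma x == x]| = q ->
  #|K| = (q ^ n)%N ->
  f \is monic -> size f = m.+1 -> (2 <= m)%N ->
  sk_irreducible sigma f -> ~ right_invariant sigma f ->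
  (m.-1 <= n)%N ->
  (forall x : 'rV[K]_m, in_nucleus (sf_mul sigma f (m:=m)) x <->
      exists a : K, a != 0 /\ x = sf_const m a) ->
  exists G : {group {perm 'rV[K]_m}},
    [/\ #|G| = ((q ^ n).-1 %/ q.-1)%N,
        forall p : {perm 'rV[K]_m}, p \in G ->
          [/\ inner_aut (sf_mul sigma f (m:=m)) (sf_one K m) p,
              (forall a : K, a != 0 -> p (sf_const m a) = sf_const m a) &
              mid_inner (sf_mul sigma f (m:=m)) p],
        G \subset Inn (sf_mul sigma f (m:=m)) (sf_one K m),
        cyclic G &
        exists phi : {unit K} -> {perm 'rV[K]_m},
          [/\ {in kerN sigma n &, {morph phi : u v / (u * v)%g >-> (u * v)%g}},
              {in kerN sigma n &, injective phi} &
              phi @: kerN sigma n = G]].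
Proof.
(* Monicity, irreducibility, non-invariance and m - 1 <= n serve in the paper
   only to compute the nucleus, which is assumed here. *)
move=> sigma_bij n_gt1 sigma_n sigma_order card_fixed card_K _ size_f m_gt1 _ _ _ nucleus_K.
have const_in_nucleus a : a != 0 -> in_nucleus (sf_mul sigma f (m:=m)) (sf_const m a).
  by move=> a_neq0; apply/nucleus_K; exists a.
exists (inner_group sigma m); split.
- by rewrite card_inner_group // -card_K -card_fixed.
- move=> p; rewrite inner_groupE => /imsetP[c _ ->]; split.
  + exact: inner_perm_aut.
  + by move=> a _; apply: inner_perm_const.
  + exact: inner_perm_mid.
- apply/subsetP => p; rewrite inner_groupE => /imsetP[c _ ->].
  by rewrite inE inner_perm_Mlt //= inner_perm_const.
- exact: cyclic_inner_group.
- exists (norm_perm sigma m); split.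
  + by move=> u v _ _; apply: norm_permM.
  + by move=> u v _ _; apply: norm_perm_inj.
  + exact: norm_perm_kerN sigma_bij (ltnW n_gt1) sigma_n sigma_order.
Qed.
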